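(* An $\mathcal R$-module $\mathbb M$ is dually separated if and only if for every $R$-module $N$ and every morphism of $\mathcal R$-modules $f\colon\mathbb M\to\mathcal N$, the cokernel $\operatorname{Coker} f$ (computed objectwise, $(\operatorname{Coker} f)(S)=\operatorname{Coker} f_S$) is quasi-coherent, i.e. it coincides with the quasi-coherent module associated with the $R$-module $\operatorname{Coker}(f_R\colon\mathbb M(R)\to N)$.
   Context: $R$ is a commutative ring. An $\mathcal R$-module is a covariant functor $\mathbb M$ from commutative $R$-algebras to abelian groups with each $\mathbb M(S)$ an $S$-module, functorially; morphisms are natural transformations that are $S$-linear on each $S$. For an $R$-module $N$, the quasi-coherent $\mathcal R$-module $\mathcal N$ is $\mathcal N(S)=N\otimes_R S$. $\mathbb M^*(S)=\operatorname{Hom}_{\mathcal S}(\mathbb M_{|S},\mathcal S)$ where $\mathbb M_{|S}$ is restriction to $S$-algebras. $\mathbb M$ is dually separated if for every commutative $R$-algebra $S$ the map $\mathbb M^*(S)\to\operatorname{Hom}_R(\mathbb M(R),S)$, $w\mapsto w_R$, is injective. *)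

From HB Require Import structures.
From mathcomp Require Import all_boot all_order all_algebra.
Set Implicit Arguments. Unset Strict Implicit. Unset Printing Implicit Defensive.
Import GRing.Theory.
Local Open Scope ring_scope.

Record ralg (R : comPzRingType) := RAlg {
  ralg_car :> comPzRingType;
  ralg_str : {rmorphism R -> ralg_car} }.

Record ralg_hom (R : comPzRingType) (S T : ralg R) := RAlgHom {
  rah_fun :> {rmorphism S -> T};
  rah_str : forall r : R, rah_fun (ralg_str S r) = ralg_str T r }.

Definition ralgR (R : comPzRingType) : ralg R := @RAlg R R idfun.

Definition str_hom (R : comPzRingType) (S : ralg R) : ralg_hom (ralgR R) S :=
  @RAlgHom R (ralgR R) S (ralg_str S) (fun r => erefl).

Definition id_hom (R : comPzRingType) (S : ralg R) : ralg_hom S S :=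
  @RAlgHom R S S idfun (fun r => erefl).

(* An R-module (in the sense of the paper): a functor from commutative
   R-algebras to abelian groups, M(S) an S-module, functorial maps
   additive and semilinear over the algebra morphism. *)
Record rmodule (R : comPzRingType) := RModule {
  rm_obj : forall S : ralg R, lmodType S;
  rm_map : forall (S T : ralg R), ralg_hom S T -> rm_obj S -> rm_obj T;
  rm_add : forall (S T : ralg R) (g : ralg_hom S T) (x y : rm_obj S),
      rm_map g (x + y) = rm_map g x + rm_map g y;
  rm_scale : forall (S T : ralg R) (g : ralg_hom S T) (s : S) (x : rm_obj S),
      rm_map g (s *: x) = g s *: rm_map g x;
  rm_id : forall (S : ralg R) (g : ralg_hom S S),
      (forall s, g s = s) -> forall x, rm_map g x = x;
  rm_comp : forall (S T U : ralg R) (g : ralg_hom S T) (h : ralg_hom T U)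
      (k : ralg_hom S U), (forall s, k s = h (g s)) ->
      forall x, rm_map k x = rm_map h (rm_map g x) }.
Arguments rm_obj {R} r S : rename.
Arguments rm_map {R} r {S T} _ _ : rename.

Record rmorph (R : comPzRingType) (M N : rmodule R) := RMorph {
  rmor :> forall S : ralg R, rm_obj M S -> rm_obj N S;
  rmor_add : forall (S : ralg R) (x y : rm_obj M S), rmor (x + y) = rmor x + rmor y;
  rmor_scale : forall (S : ralg R) (s : S) (x : rm_obj M S), rmor (s *: x) = s *: rmor x;
  rmor_nat : forall (S T : ralg R) (g : ralg_hom S T) (x : rm_obj M S),
      rmor (rm_map M g x) = rm_map N g (rmor x) }.

(* Elements of M^*(S) = Hom_S(M_|S, S-cal).  An S-algebra is represented
   as an R-algebra T together with an R-algebra morphism u : S -> T;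
   S-cal(T) = S (x)_S T = T. *)
Record dual_elt (R : comPzRingType) (M : rmodule R) (S : ralg R) := DualElt {
  dw : forall (T : ralg R), ralg_hom S T -> rm_obj M T -> T;
  dw_add : forall (T : ralg R) (u : ralg_hom S T) (x y : rm_obj M T),
      dw u (x + y) = dw u x + dw u y;
  dw_scale : forall (T : ralg R) (u : ralg_hom S T) (t : T) (x : rm_obj M T),
      dw u (t *: x) = t * dw u x;
  dw_nat : forall (T T' : ralg R) (u : ralg_hom S T) (u' : ralg_hom S T')
      (g : ralg_hom T T'), (forall s, g (u s) = u' s) ->
      forall x, dw u' (rm_map M g x) = g (dw u x) }.

Definition dual_res (R : comPzRingType) (M : rmodule R) (S : ralg R)
  (w : dual_elt M S) (m : rm_obj M (ralgR R)) : S :=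
  dw w (id_hom S) (rm_map M (str_hom S) m).

Definition dually_separated (R : comPzRingType) (M : rmodule R) : Prop :=
  forall (S : ralg R) (w w' : dual_elt M S),
    (forall m, dual_res w m = dual_res w' m) ->
    forall (T : ralg R) (u : ralg_hom S T) (x : rm_obj M T), dw w u x = dw w' u x.

(* The canonical map M(R) -> M(S) exhibits M(S) as M(R) (x)_R S
   (universal property of extension of scalars). *)
Definition qc_at (R : comPzRingType) (M : rmodule R) (S : ralg R) : Prop :=
  forall (P : lmodType S) (phi : rm_obj M (ralgR R) -> P),
    (forall x y, phi (x + y) = phi x + phi y) ->
    (forall (r : R) x, phi (r *: x) = ralg_str S r *: phi x) ->
    exists psi : rm_obj M S -> P,
      [/\ (forall x y, psi (x + y) = psi x + psi y),
          (forall (s : S) x, psi (s *: x) = s *: psi x),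
          (forall m, psi (rm_map M (str_hom S) m) = phi m) &
          (forall psi' : rm_obj M S -> P,
              (forall x y, psi' (x + y) = psi' x + psi' y) ->
              (forall (s : S) x, psi' (s *: x) = s *: psi' x) ->
              (forall m, psi' (rm_map M (str_hom S) m) = phi m) ->
              forall x, psi' x = psi x)].

Definition quasi_coherent (R : comPzRingType) (M : rmodule R) : Prop :=
  forall S : ralg R, qc_at M S.

Definition is_coker (R : comPzRingType) (M N C : rmodule R)
  (f : rmorph M N) (p : rmorph N C) : Prop :=
  forall S : ralg R,
    (forall y : rm_obj C S, exists x, p S x = y) /\
    (forall x : rm_obj N S, p S x = 0 <-> exists m, f S m = x).

From HB Require Import structures.
From mathcomp Require Import all_boot all_order all_algebra ring_quotient boolp.
Set Implicit Arguments. Unset Strict Implicit. Unset Printing Implicit Defensive.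
Import GRing.Theory.
Local Open Scope ring_scope.
Local Open Scope quotient_scope.

(* If M is dually separated, N quasi-coherent and C = Coker f, extend an
   R-linear phi : C(R) -> P (P an S-module) as follows.  Through the
   square-zero extension S' = S (+) P, phi o p_R is an R-linear map
   N(R) -> S', which for quasi-coherent N is the restriction of a dual element
   of N over S'.  Pulled back along f it is a dual element of M over S' that
   vanishes on M(R) because p o f = 0, hence vanishes everywhere.  Its
   P-component says that the S-linear extension of phi o p_R to N(S) kills
   f(M(S)), so it factors through C(S) = Coker f_S.

   Conversely, a dual element w of M over S is the same as a morphism
   M -> S (x)_R -, recovered through the multiplication S (x)_R T -> T.  For
   w - w' with w_R = w'_R this morphism vanishes on M(R); its cokernel is then
   quasi-coherent and agrees with S (x)_R - at R, which forces the morphism,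
   hence w - w', to vanish. *)

Section Additive.
Variables (V W : zmodType) (f : V -> W).
Hypothesis fD : {morph f : x y / x + y}.

Lemma additive0 : f 0 = 0.
Proof. by apply: (addrI (f 0)); rewrite -fD !addr0. Qed.
Lemma additiveB : zmod_morphism f.
Proof. by move=> x y; apply: (addIr (f y)); rewrite -fD !subrK. Qed.
Lemma additive_sum I (r : seq I) (F : I -> V) :
  f (\sum_(i <- r) F i) = \sum_(i <- r) f (F i).
Proof. by elim: r => [|i r IH]; rewrite ?big_nil ?additive0 // !big_cons fD IH. Qed.
End Additive.

Definition restrict_scalars (A B : comPzRingType) of {rmorphism A -> B} :=
  fun P : lmodType B => P : Type.

Section RestrictScalars.
Variables (A B : comPzRingType) (g : {rmorphism A -> B}) (P : lmodType B).
Local Notation restrict_scalars := (restrict_scalars g P).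

HB.instance Definition _ := GRing.Zmodule.on restrict_scalars.

Definition restrict_scale (a : A) (p : restrict_scalars) : restrict_scalars :=
  g a *: (p : P).
Lemma restrict_scaleA a b v :
  restrict_scale a (restrict_scale b v) = restrict_scale (a * b) v.
Proof. by rewrite /restrict_scale scalerA rmorphM. Qed.
Lemma restrict_scale1 : left_id 1 restrict_scale.
Proof. by move=> v; rewrite /restrict_scale rmorph1 scale1r. Qed.
Lemma restrict_scaleDr : right_distributive restrict_scale +%R.
Proof. by move=> a x y; rewrite /restrict_scale scalerDr. Qed.
Lemma restrict_scaleDl v : {morph restrict_scale^~ v : a b / a + b}.
Proof. by move=> a b; rewrite /restrict_scale rmorphD scalerDl. Qed.
HB.instance Definition _ := GRing.Zmodule_isLmodule.Build A restrict_scalars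
  restrict_scaleA restrict_scale1 restrict_scaleDr restrict_scaleDl.

Lemma restrictZ (a : A) (p : restrict_scalars) : a *: p = (g a *: (p : P) : P).
Proof. by []. Qed.
End RestrictScalars.

(** * Quotient modules *)

Section ModuleQuotient.
Variables (A : pzRingType) (V : lmodType A) (I : zmodClosed V).
Hypothesis scaler_closedI : GRing.scaler_closed I.
Local Notation Q0 := {ideal_quot I}.

Definition lmod_quot of GRing.scaler_closed I := Q0.
Local Notation Q := (lmod_quot scaler_closedI).
HB.instance Definition _ := GRing.Zmodule.on Q.

Definition lmod_quot_pi : V -> Q := \pi_Q0.
Definition quot_scale (a : A) (q : Q) : Q := lmod_quot_pi (a *: repr (q : Q0)).

Lemma lmod_quot_piD : {morph lmod_quot_pi : x y / x + y}.
Proof. exact: (raddfD (\pi_Q0)). Qed.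
Lemma lmod_quot_pi_scale a x : lmod_quot_pi (a *: x) = quot_scale a (lmod_quot_pi x).
Proof.
apply/eqP; rewrite -Quotient.idealrBE.
by rewrite -scalerBr scaler_closedI // Quotient.idealrBE reprK.
Qed.
Lemma lmod_quot_piP (P : Q -> Prop) : (forall x, P (lmod_quot_pi x)) -> forall q, P q.
Proof. by move=> h q; rewrite -[q : Q0]reprK; apply: h. Qed.

Lemma quot_scaleA a b v : quot_scale a (quot_scale b v) = quot_scale (a * b) v.
Proof. by elim/lmod_quot_piP: v => x; rewrite -!lmod_quot_pi_scale scalerA. Qed.
Lemma quot_scale1 : left_id 1 quot_scale.
Proof. by elim/lmod_quot_piP => x; rewrite -lmod_quot_pi_scale scale1r. Qed.
Lemma quot_scaleDr : right_distributive quot_scale +%R.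
Proof.
move=> a; elim/lmod_quot_piP => x; elim/lmod_quot_piP => y.
by rewrite -lmod_quot_piD -!lmod_quot_pi_scale -lmod_quot_piD scalerDr.
Qed.
Lemma quot_scaleDl v : {morph quot_scale^~ v : a b / a + b}.
Proof.
by elim/lmod_quot_piP: v => x a b; rewrite -!lmod_quot_pi_scale scalerDl lmod_quot_piD.
Qed.
HB.instance Definition _ := GRing.Zmodule_isLmodule.Build A Q
  quot_scaleA quot_scale1 quot_scaleDr quot_scaleDl.

Lemma lmod_quot_piZ a x : lmod_quot_pi (a *: x) = a *: lmod_quot_pi x.
Proof. exact: lmod_quot_pi_scale. Qed.
Lemma lmod_quot_pi_eq0 x : (lmod_quot_pi x == 0) = (x \in I).
Proof. by rewrite -[x in RHS]subr0 Quotient.idealrBE (raddf0 (\pi_Q0)). Qed.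
End ModuleQuotient.

(** * Tensor product of R-algebras *)

Section TensorProduct.
Variables (R : comPzRingType) (S U : ralg R).
Local Notation iS := (ralg_str S).
Local Notation iU := (ralg_str U).

Definition balanced (P : lmodType U) (phi : S -> P) : Prop :=
  (forall x y, phi (x + y) = phi x + phi y) /\
  (forall r x, phi (iS r * x) = iU r *: phi x).

Lemma balanced_mull P phi (s : S) : @balanced P phi -> balanced (fun x => phi (s * x)).
Proof. by case=> hD hZ; split=> [x y|r x]; rewrite ?mulrDr ?hD // mulrCA hZ. Qed.
Lemma balanced_mulr P phi (s : S) : @balanced P phi -> balanced (fun x => phi (x * s)).
Proof. by case=> hD hZ; split=> [x y|r x]; rewrite ?mulrDl ?hD // -mulrA hZ. Qed.

Definition fsum_eval (P : lmodType U) (phi : S -> P) (a : seq (S * U)) : P :=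
  \sum_(x <- a) x.2 *: phi x.1.

(* Two formal sums are identified when no balanced map into a U-module tells
   them apart, so that S (x)_R U has its universal property by construction. *)
Definition tensor_rel (a b : seq (S * U)) : bool :=
  `[< forall (P : lmodType U) (phi : S -> P),
        balanced phi -> fsum_eval phi a = fsum_eval phi b >].

Lemma tensor_relP a b :
  reflect (forall P phi, balanced phi -> @fsum_eval P phi a = fsum_eval phi b)
          (tensor_rel a b).
Proof. exact: asboolP. Qed.

Lemma tensor_rel_is_equiv : equiv_class_of tensor_rel.
Proof.
split=> [a|a b|b a c]; first by apply/tensor_relP.
  by apply/tensor_relP/tensor_relP => h P phi /h.
by move=> /tensor_relP h1 /tensor_relP h2; apply/tensor_relP => P phi hp; rewrite h1 ?h2.
Qed.
Canonical tensor_rel_equiv := EquivRelPack tensor_rel_is_equiv.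
Canonical tensor_rel_encModRel := defaultEncModRel tensor_rel.

Definition tensor := {eq_quot tensor_rel}.
HB.instance Definition _ : EqQuotient _ tensor_rel tensor := EqQuotient.on tensor.
HB.instance Definition _ := Choice.on tensor.

Lemma eq_pi_tensor a b :
  (forall P phi, balanced phi -> @fsum_eval P phi a = fsum_eval phi b) ->
  \pi_tensor a = \pi_tensor b.
Proof. by move=> h; apply/eqmodP/tensor_relP. Qed.

Lemma fsum_eval_repr P phi a : @balanced P phi ->
  fsum_eval phi (repr (\pi_tensor a)) = fsum_eval phi a.
Proof. by move=> hp; apply/tensor_relP: hp; rewrite -eqmodE reprK. Qed.

Definition tensor_opp_seq (a : seq (S * U)) := [seq (x.1, - x.2) | x <- a].
Definition tensor_mul_seq (a b : seq (S * U)) :=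
  [seq (x.1 * y.1, x.2 * y.2) | x <- a, y <- b].
Definition tensor_scale_seq (c : U) (a : seq (S * U)) := [seq (x.1, c * x.2) | x <- a].

Lemma fsum_eval_cat P phi a b : @fsum_eval P phi (a ++ b) = fsum_eval phi a + fsum_eval phi b.
Proof. by rewrite /fsum_eval big_cat. Qed.
Lemma fsum_eval_opp P phi a : @fsum_eval P phi (tensor_opp_seq a) = - fsum_eval phi a.
Proof. by rewrite /fsum_eval big_map -sumrN; apply: eq_bigr => x _; rewrite scaleNr. Qed.
Lemma fsum_eval_scale P phi c a :
  @fsum_eval P phi (tensor_scale_seq c a) = c *: fsum_eval phi a.
Proof. by rewrite /fsum_eval big_map scaler_sumr; apply: eq_bigr => x _; rewrite scalerA. Qed.
Lemma fsum_eval_mull P phi a b : @fsum_eval P phi (tensor_mul_seq a b) =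
  \sum_(x <- a) x.2 *: fsum_eval (fun s => phi (x.1 * s)) b.
Proof.
rewrite /fsum_eval big_allpairs_dep; apply: eq_bigr => x _.
by rewrite scaler_sumr; apply: eq_bigr => y _; rewrite scalerA.
Qed.
Lemma fsum_eval_mulr P phi a b : @fsum_eval P phi (tensor_mul_seq a b) =
  \sum_(y <- b) y.2 *: fsum_eval (fun s => phi (s * y.1)) a.
Proof.
rewrite /fsum_eval big_allpairs_dep exchange_big; apply: eq_bigr => y _.
by rewrite scaler_sumr; apply: eq_bigr => x _; rewrite scalerA [y.2 * _]mulrC.
Qed.

Lemma fsum_eval_mul_congr a a' b b' :
  (forall P phi, balanced phi -> @fsum_eval P phi a = fsum_eval phi a') ->
  (forall P phi, balanced phi -> @fsum_eval P phi b = fsum_eval phi b') ->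
  forall P phi, balanced phi ->
  @fsum_eval P phi (tensor_mul_seq a b) = fsum_eval phi (tensor_mul_seq a' b').
Proof.
move=> ha hb P phi hp; rewrite fsum_eval_mulr.
under eq_bigr => y _ do rewrite (ha _ _ (balanced_mulr _ hp)).
rewrite -fsum_eval_mulr fsum_eval_mull.
by under eq_bigr => x _ do rewrite (hb _ _ (balanced_mull _ hp)); rewrite -fsum_eval_mull.
Qed.

Definition tensor_zero := lift_cst tensor [::].
Definition tensor_add := lift_op2 tensor cat.
Definition tensor_opp := lift_op1 tensor tensor_opp_seq.
Definition tensor_one := lift_cst tensor [:: (1, 1)].
Definition tensor_mul := lift_op2 tensor tensor_mul_seq.
Definition tensor_scale (c : U) := lift_op1 tensor (tensor_scale_seq c).
Canonical pi_tensor_zero := PiConst tensor_zero.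
Canonical pi_tensor_one := PiConst tensor_one.

Lemma pi_tensor_add : {morph \pi_tensor : a b / a ++ b >-> tensor_add a b}.
Proof.
move=> a b; unlock tensor_add; apply: eq_pi_tensor => P phi hp.
by rewrite !fsum_eval_cat !fsum_eval_repr.
Qed.
Canonical pi_tensor_add_morph := PiMorph2 pi_tensor_add.

Lemma pi_tensor_opp : {morph \pi_tensor : a / tensor_opp_seq a >-> tensor_opp a}.
Proof.
move=> a; unlock tensor_opp; apply: eq_pi_tensor => P phi hp.
by rewrite !fsum_eval_opp fsum_eval_repr.
Qed.
Canonical pi_tensor_opp_morph := PiMorph1 pi_tensor_opp.

Lemma pi_tensor_mul : {morph \pi_tensor : a b / tensor_mul_seq a b >-> tensor_mul a b}.
Proof.
move=> a b; unlock tensor_mul; apply: eq_pi_tensor.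
by apply: fsum_eval_mul_congr => P phi hp; rewrite fsum_eval_repr.
Qed.
Canonical pi_tensor_mul_morph := PiMorph2 pi_tensor_mul.

Lemma pi_tensor_scale c : {morph \pi_tensor : a / tensor_scale_seq c a >-> tensor_scale c a}.
Proof.
move=> a; unlock tensor_scale; apply: eq_pi_tensor => P phi hp.
by rewrite !fsum_eval_scale fsum_eval_repr.
Qed.
Canonical pi_tensor_scale_morph c := PiMorph1 (pi_tensor_scale c).

Lemma tensor_addA : associative tensor_add.
Proof. by elim/quotW=> a; elim/quotW=> b; elim/quotW=> c; rewrite !piE catA. Qed.
Lemma tensor_addC : commutative tensor_add.
Proof.
elim/quotW=> a; elim/quotW=> b; rewrite !piE; apply: eq_pi_tensor => P phi _.
by rewrite !fsum_eval_cat addrC.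
Qed.
Lemma tensor_add0 : left_id tensor_zero tensor_add.
Proof. by elim/quotW=> a; rewrite !piE. Qed.
Lemma tensor_addN : left_inverse tensor_zero tensor_opp tensor_add.
Proof.
elim/quotW=> a; rewrite !piE; apply: eq_pi_tensor => P phi _.
by rewrite fsum_eval_cat fsum_eval_opp addNr /fsum_eval big_nil.
Qed.
HB.instance Definition _ :=
  GRing.isZmodule.Build tensor tensor_addA tensor_addC tensor_add0 tensor_addN.

Lemma tensor_mulA : associative tensor_mul.
Proof.
elim/quotW=> a; elim/quotW=> b; elim/quotW=> c; rewrite !piE.
apply: eq_pi_tensor => P phi _; rewrite /fsum_eval !big_allpairs_dep /=.
apply: eq_bigr => x _; rewrite big_allpairs_dep; apply: eq_bigr => y _.
by apply: eq_bigr => z _; rewrite !mulrA.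
Qed.
Lemma tensor_mulC : commutative tensor_mul.
Proof.
elim/quotW=> a; elim/quotW=> b; rewrite !piE; apply: eq_pi_tensor => P phi _.
rewrite fsum_eval_mull fsum_eval_mulr; apply: eq_bigr => x _; congr (_ *: _).
by apply: eq_bigr => y _; rewrite mulrC.
Qed.
Lemma tensor_mul1 : left_id tensor_one tensor_mul.
Proof.
elim/quotW=> a; rewrite !piE; apply: eq_pi_tensor => P phi _.
rewrite fsum_eval_mull big_seq1 scale1r; apply: eq_bigr => x _; by rewrite mul1r.
Qed.
Lemma tensor_mulDl : left_distributive tensor_mul tensor_add.
Proof.
elim/quotW=> a; elim/quotW=> b; elim/quotW=> c; rewrite !piE.
by apply: eq_pi_tensor => P phi _; rewrite fsum_eval_mull big_cat fsum_eval_cat !fsum_eval_mull.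
Qed.
HB.instance Definition _ := GRing.Zmodule_isComPzRing.Build tensor
  tensor_mulA tensor_mulC tensor_mul1 tensor_mulDl.

Lemma tensor_scaleA a b v : tensor_scale a (tensor_scale b v) = tensor_scale (a * b) v.
Proof.
elim/quotW: v => x; rewrite !piE; apply: eq_pi_tensor => P phi _.
by rewrite !fsum_eval_scale scalerA.
Qed.
Lemma tensor_scale1 : left_id 1 tensor_scale.
Proof.
by elim/quotW=> x; rewrite !piE; apply: eq_pi_tensor => P phi _; rewrite fsum_eval_scale scale1r.
Qed.
Lemma tensor_scaleDr : right_distributive tensor_scale +%R.
Proof.
move=> c; elim/quotW=> x; elim/quotW=> y; rewrite !piE.
by apply: eq_pi_tensor => P phi _; rewrite !(fsum_eval_cat, fsum_eval_scale) scalerDr.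
Qed.
Lemma tensor_scaleDl v : {morph tensor_scale^~ v : a b / a + b}.
Proof.
elim/quotW: v => x a b; rewrite !piE.
by apply: eq_pi_tensor => P phi _; rewrite !(fsum_eval_cat, fsum_eval_scale) scalerDl.
Qed.
HB.instance Definition _ := GRing.Zmodule_isLmodule.Build U tensor
  tensor_scaleA tensor_scale1 tensor_scaleDr tensor_scaleDl.
End TensorProduct.

Section TensorAlgebra.
Variables (R : comPzRingType) (S U : ralg R).
Local Notation iS := (ralg_str S).
Local Notation iU := (ralg_str U).
Local Notation tensor := (tensor S U).
Local Notation pi := (\pi_tensor : seq (S * U) -> tensor).

Lemma pi_tensorD a b : pi (a ++ b) = pi a + pi b.
Proof. exact: pi_tensor_add. Qed.
Lemma pi_tensor0 : pi [::] = 0.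
Proof. by rewrite piE. Qed.
Lemma pi_tensorN a : pi (tensor_opp_seq a) = - pi a.
Proof. exact: pi_tensor_opp. Qed.
Lemma pi_tensorM a b : pi (tensor_mul_seq a b) = pi a * pi b.
Proof. exact: pi_tensor_mul. Qed.
Lemma pi_tensorZ c a : pi (tensor_scale_seq c a) = c *: pi a.
Proof. exact: pi_tensor_scale. Qed.

Definition tensor_inl (s : S) : tensor := pi [:: (s, 1)].
Definition tensor_inr (u : U) : tensor := pi [:: (1, u)].

Lemma pi_tensor_sum a : pi a = \sum_(x <- a) x.2 *: tensor_inl x.1.
Proof.
elim: a => [|x a IH]; first by rewrite big_nil pi_tensor0.
rewrite big_cons -IH -cat1s pi_tensorD -pi_tensorZ; congr (_ + _).
by apply: eq_pi_tensor => P phi _; rewrite /fsum_eval /= !big_seq1 mulr1.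
Qed.

Lemma tensor_inl_is_zmod_morphism : zmod_morphism tensor_inl.
Proof.
move=> x y; rewrite /tensor_inl -pi_tensorN -pi_tensorD.
apply: eq_pi_tensor => P phi hp.
by rewrite fsum_eval_cat fsum_eval_opp /fsum_eval !big_seq1 !scale1r (additiveB hp.1).
Qed.
Lemma tensor_inl_is_monoid_morphism : monoid_morphism tensor_inl.
Proof.
split=> [|x y]; rewrite /tensor_inl; first by rewrite piE.
rewrite -pi_tensorM.
by apply: eq_pi_tensor => P phi _; rewrite /tensor_mul_seq /= mulr1.
Qed.
HB.instance Definition _ := GRing.isZmodMorphism.Build S tensor tensor_inl
  tensor_inl_is_zmod_morphism.
HB.instance Definition _ := GRing.isMonoidMorphism.Build S tensor tensor_inl
  tensor_inl_is_monoid_morphism.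

Lemma tensor_inr_is_zmod_morphism : zmod_morphism tensor_inr.
Proof.
move=> x y; rewrite /tensor_inr -pi_tensorN -pi_tensorD.
apply: eq_pi_tensor => P phi _.
by rewrite fsum_eval_cat fsum_eval_opp /fsum_eval !big_seq1 scalerBl.
Qed.
Lemma tensor_inr_is_monoid_morphism : monoid_morphism tensor_inr.
Proof.
split=> [|x y]; rewrite /tensor_inr; first by rewrite piE.
rewrite -pi_tensorM.
by apply: eq_pi_tensor => P phi _; rewrite /tensor_mul_seq /= mulr1.
Qed.
HB.instance Definition _ := GRing.isZmodMorphism.Build U tensor tensor_inr
  tensor_inr_is_zmod_morphism.
HB.instance Definition _ := GRing.isMonoidMorphism.Build U tensor tensor_inr
  tensor_inr_is_monoid_morphism.

Lemma tensor_inlZ r x : tensor_inl (iS r * x) = iU r *: tensor_inl x.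
Proof.
rewrite -pi_tensorZ; apply: eq_pi_tensor => P phi hp.
by rewrite /fsum_eval !big_seq1 /= scale1r mulr1 hp.2.
Qed.

Definition tensor_str : {rmorphism R -> tensor} := tensor_inr \o iU.
Definition tensor_ralg : ralg R := @RAlg R tensor tensor_str.

Lemma tensor_inl_str r : tensor_inl (iS r) = tensor_str r.
Proof.
apply: eq_pi_tensor => P phi hp; rewrite /fsum_eval !big_seq1 /= scale1r.
by rewrite -[iS r]mulr1 hp.2.
Qed.
Definition tensor_inl_hom : ralg_hom S tensor_ralg :=
  @RAlgHom R S tensor_ralg tensor_inl tensor_inl_str.
Definition tensor_inr_hom : ralg_hom U tensor_ralg :=
  @RAlgHom R U tensor_ralg tensor_inr (fun r => erefl).

Lemma tensor_scaleE (c : U) (q : tensor) : c *: q = tensor_inr c * q.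
Proof.
elim/quotW: q => a; rewrite /tensor_inr -pi_tensorM -pi_tensorZ.
apply: eq_pi_tensor => P phi _; rewrite fsum_eval_scale fsum_eval_mull big_seq1 /=.
by congr (_ *: _); apply: eq_bigr => x _; rewrite mul1r.
Qed.

Section UniversalProperty.
Variables (P : lmodType U) (phi : S -> P).
Hypothesis phi_balanced : balanced phi.

Definition tensor_lift (q : tensor) : P := fsum_eval phi (repr q).

Lemma tensor_liftE a : tensor_lift (pi a) = fsum_eval phi a.
Proof. exact: fsum_eval_repr. Qed.
Lemma tensor_liftD : {morph tensor_lift : p q / p + q}.
Proof.
by elim/quotW=> a; elim/quotW=> b; rewrite -pi_tensorD !tensor_liftE fsum_eval_cat.
Qed.
Lemma tensor_liftZ (c : U) q : tensor_lift (c *: q) = c *: tensor_lift q.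
Proof. by elim/quotW: q => a; rewrite -pi_tensorZ !tensor_liftE fsum_eval_scale. Qed.
Lemma tensor_lift_inl s : tensor_lift (tensor_inl s) = phi s.
Proof. by rewrite tensor_liftE /fsum_eval big_seq1 scale1r. Qed.
End UniversalProperty.

Lemma tensor_lift_unique (P : lmodType U) (F G : tensor -> P) :
  {morph F : p q / p + q} -> (forall (c : U) q, F (c *: q) = c *: F q) ->
  {morph G : p q / p + q} -> (forall (c : U) q, G (c *: q) = c *: G q) ->
  (forall s, F (tensor_inl s) = G (tensor_inl s)) -> F =1 G.
Proof.
move=> FD FZ GD GZ eFG; elim/quotW=> a; rewrite pi_tensor_sum.
rewrite (additive_sum FD) (additive_sum GD); apply: eq_bigr => x _.
by rewrite FZ GZ eFG.
Qed.
End TensorAlgebra.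

Section TensorMap.
Variables (R : comPzRingType) (S U U' : ralg R) (g : ralg_hom U U').
Local Notation restr := (restrict_scalars (rah_fun g) (tensor S U')).

Lemma tensor_inl_balanced : @balanced R S U restr (@tensor_inl R S U').
Proof.
split=> [x y|r x]; first exact: rmorphD.
by rewrite restrictZ rah_str tensor_inlZ.
Qed.

Definition tensor_map : tensor S U -> tensor S U' :=
  tensor_lift (P := restr) (@tensor_inl R S U').

Lemma tensor_mapE a :
  tensor_map (\pi_(tensor S U) a) = \pi_(tensor S U') [seq (x.1, g x.2) | x <- a].
Proof.
rewrite /tensor_map tensor_liftE ?[RHS]pi_tensor_sum ?big_map //.
exact: tensor_inl_balanced.
Qed.
Lemma tensor_mapD : {morph tensor_map : p q / p + q}.
Proof. exact: (tensor_liftD tensor_inl_balanced). Qed.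
Lemma tensor_mapZ (c : U) q : tensor_map (c *: q) = g c *: tensor_map q.
Proof. exact: (tensor_liftZ tensor_inl_balanced). Qed.
Lemma tensor_map_inl s : tensor_map (tensor_inl U s) = tensor_inl U' s.
Proof. exact: (tensor_lift_inl tensor_inl_balanced). Qed.
Lemma tensor_map_inr u : tensor_map (tensor_inr S u) = tensor_inr S (g u).
Proof. by rewrite /tensor_inr tensor_mapE. Qed.

Lemma tensor_map_is_monoid_morphism : monoid_morphism tensor_map.
Proof.
split; first by rewrite -(rmorph1 (@tensor_inr R S U)) tensor_map_inr !rmorph1.
elim/quotW=> a; elim/quotW=> b; rewrite -pi_tensorM !tensor_mapE -pi_tensorM.
apply: eq_pi_tensor => P phi _.
rewrite /fsum_eval /tensor_mul_seq big_map !big_allpairs_dep big_map.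
by apply: eq_bigr => x _; rewrite big_map; apply: eq_bigr => y _; rewrite /= rmorphM.
Qed.
HB.instance Definition _ := GRing.isZmodMorphism.Build (tensor S U) (tensor S U')
  tensor_map (additiveB tensor_mapD).
HB.instance Definition _ := GRing.isMonoidMorphism.Build (tensor S U) (tensor S U')
  tensor_map tensor_map_is_monoid_morphism.

Definition tensor_map_hom : ralg_hom (tensor_ralg S U) (tensor_ralg S U') :=
  @RAlgHom R (tensor_ralg S U) (tensor_ralg S U') tensor_map
    (fun r => etrans (tensor_map_inr _) (congr1 _ (rah_str g r))).
End TensorMap.

Lemma tensor_map_id (R : comPzRingType) (S U : ralg R) (g : ralg_hom U U) :
  (forall u, g u = u) -> tensor_map (S := S) g =1 id.
Proof.
move=> gE; apply: (tensor_lift_unique (P := tensor S U)) => //.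
- exact: tensor_mapD.
- by move=> c q; rewrite tensor_mapZ gE.
- by move=> s; rewrite tensor_map_inl.
Qed.

Lemma tensor_map_comp (R : comPzRingType) (S U U' U'' : ralg R) (g : ralg_hom U U')
    (h : ralg_hom U' U'') (k : ralg_hom U U'') :
  (forall u, k u = h (g u)) ->
  tensor_map (S := S) k =1 tensor_map (S := S) h \o tensor_map (S := S) g.
Proof.
move=> kE; apply: (tensor_lift_unique (P := restrict_scalars k (tensor S U''))).
- exact: tensor_mapD.
- exact: tensor_mapZ.
- by move=> p q /=; rewrite !tensor_mapD.
- by move=> c q; rewrite /= !tensor_mapZ restrictZ kE.
- by move=> s; rewrite /= !tensor_map_inl.
Qed.

Section TensorMultiplication.
Variables (R : comPzRingType) (S T : ralg R) (u : ralg_hom S T).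

Lemma ralg_hom_balanced : @balanced R S T T^o u.
Proof. by split=> [x y|r x]; rewrite ?rmorphD // rmorphM rah_str. Qed.

Definition tensor_mult : tensor S T -> T := tensor_lift (P := T^o) u.

Lemma tensor_multE a : tensor_mult (\pi_(tensor S T) a) = \sum_(x <- a) x.2 * u x.1.
Proof. exact: (tensor_liftE ralg_hom_balanced). Qed.
Lemma tensor_mult_inl s : tensor_mult (tensor_inl T s) = u s.
Proof. exact: (tensor_lift_inl ralg_hom_balanced). Qed.
Lemma tensor_mult_inr t : tensor_mult (tensor_inr S t) = t.
Proof. by rewrite tensor_multE big_seq1 /= rmorph1 mulr1. Qed.

Lemma tensor_mult_is_monoid_morphism : monoid_morphism tensor_mult.
Proof.
split; first by rewrite -(rmorph1 (@tensor_inr R S T)) tensor_mult_inr.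
elim/quotW=> a; elim/quotW=> b; rewrite -pi_tensorM !tensor_multE.
rewrite /tensor_mul_seq big_allpairs_dep mulr_suml; apply: eq_bigr => x _.
by rewrite mulr_sumr; apply: eq_bigr => y _; rewrite /= rmorphM mulrACA.
Qed.
HB.instance Definition _ := GRing.isZmodMorphism.Build (tensor S T) T tensor_mult
  (additiveB (tensor_liftD ralg_hom_balanced)).
HB.instance Definition _ := GRing.isMonoidMorphism.Build (tensor S T) T tensor_mult
  tensor_mult_is_monoid_morphism.

Definition tensor_mult_hom : ralg_hom (tensor_ralg S T) T :=
  @RAlgHom R (tensor_ralg S T) T tensor_mult (fun r => tensor_mult_inr _).
End TensorMultiplication.

Section TensorModule.
Variables (R : comPzRingType) (S : ralg R).

Definition tensor_rmodule : rmodule R :=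
  @RModule R (tensor S) (fun U U' g => tensor_map (S := S) g)
    (fun U U' g => tensor_mapD g) (fun U U' g => tensor_mapZ g)
    (fun U g => tensor_map_id (S := S) (g := g))
    (fun U U' U'' g h k => tensor_map_comp (S := S) (g := g) (h := h) (k := k)).

Lemma tensor_rmodule_qc : quasi_coherent tensor_rmodule.
Proof.
move=> U P phi phiD phiZ.
pose phi0 s := phi (tensor_inl (ralgR R) s).
have phi0_bal : balanced phi0.
  split=> [x y|r x]; first by rewrite /phi0 rmorphD phiD.
  by rewrite /phi0 (tensor_inlZ (ralgR R)) phiZ.
exists (tensor_lift phi0); split.
- exact: tensor_liftD.
- exact: tensor_liftZ.
- apply: (tensor_lift_unique (U := ralgR R) (P := restrict_scalars (ralg_str U) P)
    (F := tensor_lift phi0 \o tensor_map (str_hom U)) (G := phi)) => //=.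
  + by move=> p q /=; rewrite tensor_mapD tensor_liftD.
  + by move=> c q /=; rewrite tensor_mapZ tensor_liftZ.
  + by move=> s /=; rewrite tensor_map_inl tensor_lift_inl.
- move=> psi psiD psiZ psiE; apply: tensor_lift_unique => //.
  + exact: tensor_liftD.
  + exact: tensor_liftZ.
  + by move=> s; have := psiE (tensor_inl (ralgR R) s); rewrite /= tensor_map_inl tensor_lift_inl.
Qed.
End TensorModule.

(** * Cokernels *)

Lemma rm_mapB (R : comPzRingType) (K : rmodule R) (U U' : ralg R) (g : ralg_hom U U') :
  zmod_morphism (rm_map K g).
Proof. exact: additiveB (rm_add g). Qed.

Section Cokernel.
Variables (R : comPzRingType) (M N : rmodule R) (f : rmorph M N).

Lemma rmor0 (U : ralg R) : f U 0 = 0.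
Proof. exact: additive0 (@rmor_add _ _ _ f U). Qed.
Lemma rmorB (U : ralg R) : zmod_morphism (f U).
Proof. exact: additiveB (@rmor_add _ _ _ f U). Qed.

Definition rmorph_image (U : ralg R) : {pred rm_obj N U} :=
  fun x => `[< exists m, f U m = x >].
Arguments rmorph_image U : clear implicits.

Lemma rmorph_imageP (U : ralg R) x : reflect (exists m, f U m = x) (x \in rmorph_image U).
Proof. exact: asboolP. Qed.

Lemma rmorph_image_zmod_closed (U : ralg R) : zmod_closed (rmorph_image U).
Proof.
split; first by apply/rmorph_imageP; exists 0; rewrite rmor0.
move=> _ _ /rmorph_imageP[m <-] /rmorph_imageP[m' <-].
by apply/rmorph_imageP; exists (m - m'); rewrite rmorB.
Qed.
HB.instance Definition _ (U : ralg R) :=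
  GRing.isZmodClosed.Build _ (rmorph_image U) (rmorph_image_zmod_closed U).

Lemma rmorph_image_scaler_closed (U : ralg R) : GRing.scaler_closed (rmorph_image U).
Proof.
move=> a _ /rmorph_imageP[m <-].
by apply/rmorph_imageP; exists (a *: m); rewrite rmor_scale.
Qed.

Definition coker_obj (U : ralg R) : lmodType U :=
  lmod_quot (@rmorph_image_scaler_closed U).
Arguments coker_obj U : clear implicits.
Definition coker_proj (U : ralg R) : rm_obj N U -> coker_obj U := lmod_quot_pi _.

Lemma coker_proj_eq0 (U : ralg R) x : coker_proj x = 0 <-> exists m, f U m = x.
Proof.
split=> [/eqP|/rmorph_imageP h]; last by apply/eqP; rewrite lmod_quot_pi_eq0.
by rewrite lmod_quot_pi_eq0 => /rmorph_imageP.
Qed.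

Lemma coker_projD (U : ralg R) : {morph @coker_proj U : x y / x + y}.
Proof. exact: lmod_quot_piD. Qed.
Lemma coker_projZ (U : ralg R) (a : U) x : coker_proj (a *: x) = a *: coker_proj x.
Proof. exact: lmod_quot_piZ. Qed.
Lemma coker_projP (U : ralg R) (P : coker_obj U -> Prop) :
  (forall x, P (coker_proj x)) -> forall c, P c.
Proof. exact: lmod_quot_piP. Qed.
Lemma coker_proj_eq (U : ralg R) x y :
  coker_proj x = coker_proj y <-> exists m, f U m = x - y.
Proof.
rewrite -coker_proj_eq0 (additiveB (@coker_projD U)).
by split=> [->|/eqP]; rewrite ?subrr // subr_eq0 => /eqP.
Qed.

Definition coker_map (U U' : ralg R) (g : ralg_hom U U') (c : coker_obj U) :
  coker_obj U' := coker_proj (rm_map N g (repr (c : {ideal_quot _}))).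

Lemma coker_mapE (U U' : ralg R) (g : ralg_hom U U') x :
  coker_map g (coker_proj x) = coker_proj (rm_map N g x).
Proof.
have /coker_proj_eq[m fm] : coker_proj (repr (coker_proj x : {ideal_quot _})) = coker_proj x.
  exact: reprK.
by apply/coker_proj_eq; exists (rm_map M g m); rewrite rmor_nat fm rm_mapB.
Qed.

Lemma coker_mapD (U U' : ralg R) (g : ralg_hom U U') :
  {morph coker_map g : c d / c + d}.
Proof.
elim/coker_projP => x; elim/coker_projP => y.
by rewrite -coker_projD !coker_mapE rm_add coker_projD.
Qed.
Lemma coker_mapZ (U U' : ralg R) (g : ralg_hom U U') (a : U) c :
  coker_map g (a *: c) = g a *: coker_map g c.
Proof. by elim/coker_projP: c => x; rewrite -coker_projZ !coker_mapE rm_scale coker_projZ. Qed.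
Lemma coker_map_id (U : ralg R) (g : ralg_hom U U) :
  (forall u, g u = u) -> forall c, coker_map g c = c.
Proof. by move=> gE; elim/coker_projP => x; rewrite coker_mapE rm_id. Qed.
Lemma coker_map_comp (U U' U'' : ralg R) (g : ralg_hom U U') (h : ralg_hom U' U'')
    (k : ralg_hom U U'') :
  (forall u, k u = h (g u)) -> forall c, coker_map k c = coker_map h (coker_map g c).
Proof. by move=> kE; elim/coker_projP => x; rewrite !coker_mapE (rm_comp kE). Qed.

Definition coker : rmodule R :=
  @RModule R coker_obj coker_map coker_mapD coker_mapZ coker_map_id coker_map_comp.

Definition coker_rmorph : rmorph N coker :=
  @RMorph R N coker coker_proj coker_projD coker_projZ
    (fun U U' g x => esym (coker_mapE g x)).

Lemma coker_rmorph_is_coker : is_coker f coker_rmorph.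
Proof.
move=> U; split; first by elim/coker_projP => x; exists x.
exact: coker_proj_eq0.
Qed.
End Cokernel.

(** * Dual elements and quasi-coherence *)

Section QuasiCoherentExtension.
Variables (R : comPzRingType) (N : rmodule R) (S : ralg R) (P : lmodType S).
Variable phi : rm_obj N (ralgR R) -> P.
Hypotheses (phiD : {morph phi : x y / x + y})
  (phiZ : forall (r : R) x, phi (r *: x) = ralg_str S r *: phi x).

Definition qc_extension (psi : rm_obj N S -> P) : Prop :=
  [/\ {morph psi : x y / x + y}, forall (s : S) x, psi (s *: x) = s *: psi x &
      forall m, psi (rm_map N (str_hom S) m) = phi m].

Hypothesis qcN : quasi_coherent N.

Lemma qc_extension_unique psi psi' :
  qc_extension psi -> qc_extension psi' -> psi =1 psi'.
Proof.
case=> D Z E [D' Z' E'] x; have [psi0 [_ _ _ uniq]] := qcN phiD phiZ.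
by rewrite (uniq psi) // (uniq psi').
Qed.

Definition qc_ext : rm_obj N S -> P :=
  projT1 (cid (qcN phiD phiZ)).

Lemma qc_extP : qc_extension qc_ext.
Proof. by rewrite /qc_ext; case: cid => psi /= [? ? ? _]; split. Qed.
Lemma qc_extD : {morph qc_ext : x y / x + y}.
Proof. by case: qc_extP. Qed.
Lemma qc_extZ (s : S) x : qc_ext (s *: x) = s *: qc_ext x.
Proof. by case: qc_extP. Qed.
Lemma qc_extE m : qc_ext (rm_map N (str_hom S) m) = phi m.
Proof. by case: qc_extP. Qed.
End QuasiCoherentExtension.

Section DualElements.
Variables (R : comPzRingType) (M : rmodule R) (S : ralg R).

Definition dual0 : dual_elt M S :=
  @DualElt R M S (fun _ _ _ => 0) (fun _ _ _ _ => esym (addr0 0))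
    (fun _ _ t _ => esym (mulr0 t)) (fun _ _ _ _ g _ _ => esym (rmorph0 g)).

Section Difference.
Variables w w' : dual_elt M S.

Lemma dual_sub_add (T : ralg R) (u : ralg_hom S T) x y :
  dw w u (x + y) - dw w' u (x + y) = (dw w u x - dw w' u x) + (dw w u y - dw w' u y).
Proof. by rewrite !dw_add opprD addrACA. Qed.
Lemma dual_sub_scale (T : ralg R) (u : ralg_hom S T) (t : T) x :
  dw w u (t *: x) - dw w' u (t *: x) = t * (dw w u x - dw w' u x).
Proof. by rewrite !dw_scale mulrBr. Qed.
Lemma dual_sub_nat (T T' : ralg R) (u : ralg_hom S T) (u' : ralg_hom S T')
    (g : ralg_hom T T') : (forall s, g (u s) = u' s) ->
  forall x, dw w u' (rm_map M g x) - dw w' u' (rm_map M g x) =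
            g (dw w u x - dw w' u x).
Proof. by move=> gu x; rewrite !(dw_nat _ gu) rmorphB. Qed.

Definition dual_sub : dual_elt M S :=
  @DualElt R M S (fun T u x => dw w u x - dw w' u x)
    dual_sub_add dual_sub_scale dual_sub_nat.

Lemma dual_res_sub m : dual_res dual_sub m = dual_res w m - dual_res w' m.
Proof. by []. Qed.
End Difference.
End DualElements.

Definition dual_comap (R : comPzRingType) (M N : rmodule R) (f : rmorph M N)
    (S : ralg R) (w : dual_elt N S) : dual_elt M S :=
  @DualElt R M S (fun T u x => dw w u (f T x))
    (fun T u x y => etrans (congr1 _ (rmor_add f x y)) (dw_add _ _ _ _))
    (fun T u t x => etrans (congr1 _ (rmor_scale f t x)) (dw_scale _ _ _ _))
    (fun T T' u u' g gu x => etrans (congr1 _ (rmor_nat f g x)) (dw_nat _ gu _)).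

Lemma dual_res_comap (R : comPzRingType) (M N : rmodule R) (f : rmorph M N)
    (S : ralg R) (w : dual_elt N S) m :
  dual_res (dual_comap f w) m = dual_res w (f (ralgR R) m).
Proof. by rewrite /dual_res /= rmor_nat. Qed.

Section QuasiCoherentDual.
Variables (R : comPzRingType) (N : rmodule R) (A : ralg R).
Variable h : rm_obj N (ralgR R) -> A.
Hypotheses (hD : {morph h : x y / x + y})
  (hZ : forall (r : R) x, h (r *: x) = ralg_str A r * h x).
Hypothesis qcN : quasi_coherent N.

Section Component.
Variables (T : ralg R) (v : ralg_hom A T).

Lemma qc_dual_baseD : {morph (fun m => v (h m) : T^o) : x y / x + y}.
Proof. by move=> x y; rewrite hD rmorphD. Qed.
Lemma qc_dual_baseZ (r : R) x :
  (v (h (r *: x)) : T^o) = ralg_str T r *: (v (h x) : T^o).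
Proof. by rewrite hZ rmorphM rah_str. Qed.

Definition qc_dual_comp : rm_obj N T -> T :=
  qc_ext qc_dual_baseD qc_dual_baseZ qcN.
End Component.

Lemma qc_dual_nat (T T' : ralg R) (v : ralg_hom A T) (v' : ralg_hom A T')
    (g : ralg_hom T T') : (forall a, g (v a) = v' a) ->
  forall x, qc_dual_comp v' (rm_map N g x) = g (qc_dual_comp v x).
Proof.
move=> gv; rewrite /qc_dual_comp; pose T'g := restrict_scalars (rah_fun g) T'^o.
have baseD : {morph (fun m => v' (h m) : T'g) : x y / x + y}.
  exact: qc_dual_baseD.
have baseZ (r : R) x : (v' (h (r *: x)) : T'g) = ralg_str T r *: (v' (h x) : T'g).
  by rewrite qc_dual_baseZ restrictZ rah_str.
apply: (qc_extension_unique baseD baseZ qcN); split.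
- by move=> x y /=; rewrite rm_add qc_extD.
- by move=> t x /=; rewrite rm_scale qc_extZ.
- move=> m /=; rewrite -(rm_comp (h := g) (k := str_hom T')) ?qc_extE // => r.
  by rewrite /= rah_str.
- by move=> x y /=; rewrite qc_extD rmorphD.
- by move=> t x /=; rewrite qc_extZ rmorphM.
- by move=> m /=; rewrite qc_extE gv.
Qed.

Definition qc_dual : dual_elt N A :=
  @DualElt R N A (@qc_dual_comp)
    (fun T v => qc_extD (qc_dual_baseD v) (qc_dual_baseZ v) qcN)
    (fun T v => qc_extZ (qc_dual_baseD v) (qc_dual_baseZ v) qcN)
    qc_dual_nat.

Lemma dual_res_qc_dual m : dual_res qc_dual m = h m.
Proof. exact: (qc_extE (qc_dual_baseD (id_hom A)) (qc_dual_baseZ (id_hom A))). Qed.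
End QuasiCoherentDual.

(** * Dual separation implies quasi-coherent cokernels *)

Section Idealization.
Variables (S : comPzRingType) (P : lmodType S).

Definition idealization : Type := (S * P)%type.
HB.instance Definition _ := GRing.Zmodule.on idealization.

Definition idealization_mul (a b : idealization) : idealization :=
  (a.1 * b.1, a.1 *: b.2 + b.1 *: a.2).
Definition idealization_one : idealization := (1, 0).

Lemma idealization_mulA : associative idealization_mul.
Proof.
move=> [a x] [b y] [c z]; rewrite /idealization_mul /=; congr (_, _); first by rewrite mulrA.
by rewrite !scalerDr !scalerA addrA [c * a]mulrC [c * b]mulrC.
Qed.
Lemma idealization_mulC : commutative idealization_mul.
Proof. by move=> [a x] [b y]; rewrite /idealization_mul /= mulrC addrC. Qed.
Lemma idealization_mul1 : left_id idealization_one idealization_mul.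
Proof. by move=> [a x]; rewrite /idealization_mul /= mul1r scale1r scaler0 addr0. Qed.
Lemma idealization_mulDl : left_distributive idealization_mul +%R.
Proof.
move=> [a x] [b y] [c z]; rewrite /idealization_mul /=.
by congr (_, _); rewrite ?mulrDl // scalerDl scalerDr addrACA.
Qed.
HB.instance Definition _ := GRing.Zmodule_isComPzRing.Build idealization
  idealization_mulA idealization_mulC idealization_mul1 idealization_mulDl.

Definition idealization_inl (s : S) : idealization := (s, 0).
Definition idealization_inr (x : P) : idealization := (0, x).

Lemma idealization_inl_is_zmod_morphism : zmod_morphism idealization_inl.
Proof. by move=> s t; rewrite /idealization_inl; congr (_, _); rewrite /= subr0. Qed.
Lemma idealization_inl_is_monoid_morphism : monoid_morphism idealization_inl.
Proof.
split=> // s t; rewrite /idealization_inl; congr (_, _).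
by rewrite /= !scaler0 addr0.
Qed.
HB.instance Definition _ := GRing.isZmodMorphism.Build S idealization idealization_inl
  idealization_inl_is_zmod_morphism.
HB.instance Definition _ := GRing.isMonoidMorphism.Build S idealization idealization_inl
  idealization_inl_is_monoid_morphism.

Lemma idealization_inrD : {morph idealization_inr : x y / x + y}.
Proof. by move=> x y; rewrite /idealization_inr; congr (_, _); rewrite /= addr0. Qed.
Lemma idealization_inrZ s x :
  idealization_inr (s *: x) = idealization_inl s * idealization_inr x.
Proof.
by rewrite /idealization_inr /idealization_inl; congr (_, _); rewrite /= ?mulr0 // scaler0 addr0.
Qed.
Lemma idealization_inr_inj : injective idealization_inr.
Proof. by move=> x y []. Qed.
End Idealization.

Section IdealizationAlgebra.
Variables (R : comPzRingType) (S : ralg R) (P : lmodType S).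

Definition idealization_ralg : ralg R :=
  @RAlg R (idealization P) (idealization_inl P \o ralg_str S).
Definition idealization_inl_hom : ralg_hom S idealization_ralg :=
  @RAlgHom R S idealization_ralg (idealization_inl P) (fun r => erefl).
End IdealizationAlgebra.

Lemma coker_factor (R : comPzRingType) (M N C : rmodule R) (f : rmorph M N)
    (p : rmorph N C) (S : ralg R) (P : lmodType S) (psi : rm_obj N S -> P) :
  is_coker f p -> {morph psi : x y / x + y} ->
  (forall (s : S) x, psi (s *: x) = s *: psi x) -> (forall m, psi (f S m) = 0) ->
  exists chi : rm_obj C S -> P,
    [/\ {morph chi : c d / c + d}, forall (s : S) c, chi (s *: c) = s *: chi c &
        forall x, chi (p S x) = psi x].
Proof.
move=> cokerC psiD psiZ psif; have [p_onto p_ker] := cokerC S.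
pose sec c := projT1 (cid (p_onto c)).
have secK c : p S (sec c) = c by rewrite /sec; case: cid.
have chiE x : psi (sec (p S x)) = psi x.
  have /p_ker[m fm] : p S (sec (p S x) - x) = 0.
    by rewrite (additiveB (rmor_add p (S := S))) secK subrr.
  by apply/eqP; rewrite -subr_eq0 -(additiveB psiD) -fm psif.
exists (psi \o sec); split=> [c d|s c|x] /=; last exact: chiE.
- have [[x <-] [y <-]] := (p_onto c, p_onto d).
  by rewrite -rmor_add !chiE psiD.
- by have [x <-] := p_onto c; rewrite -rmor_scale !chiE psiZ.
Qed.

Section CokernelQuasiCoherent.
Variables (R : comPzRingType) (M N C : rmodule R) (f : rmorph M N) (p : rmorph N C).
Hypotheses (dsM : dually_separated M) (qcN : quasi_coherent N) (cokerC : is_coker f p).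
Variables (S : ralg R) (P : lmodType S) (phi : rm_obj C (ralgR R) -> P).
Hypotheses (phiD : {morph phi : x y / x + y})
  (phiZ : forall (r : R) x, phi (r *: x) = ralg_str S r *: phi x).

Let S' := idealization_ralg P.
Lemma phi_pD : {morph (fun n : rm_obj N (ralgR R) => phi (p _ n)) : x y / x + y}.
Proof. by move=> x y; rewrite rmor_add phiD. Qed.
Lemma phi_pZ (r : R) (x : rm_obj N (ralgR R)) : phi (p _ (r *: x)) = ralg_str S r *: phi (p _ x).
Proof. by rewrite rmor_scale phiZ. Qed.

Let h (n : rm_obj N (ralgR R)) : S' := idealization_inr (phi (p _ n)).
Lemma hD : {morph h : x y / x + y}.
Proof. by move=> x y; rewrite /h phi_pD idealization_inrD. Qed.
Lemma hZ (r : R) (x : rm_obj N (ralgR R)) : h (r *: x) = ralg_str S' r * h x.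
Proof. by rewrite /h phi_pZ idealization_inrZ. Qed.

Let w : dual_elt M S' := dual_comap f (qc_dual hD hZ qcN).

Lemma qc_dual_comp_rmorph_eq0 (T : ralg R) (u : ralg_hom S' T) x :
  qc_dual_comp hD hZ qcN u (f T x) = 0.
Proof.
have wR m : dual_res w m = dual_res (dual0 M S') m.
  have /(cokerC _).2 pf0 : exists m', f _ m' = f (ralgR R) m by exists m.
  rewrite dual_res_comap dual_res_qc_dual /h pf0 (additive0 phiD).
  exact: (additive0 (@idealization_inrD _ P)).
exact: (dsM wR).
Qed.

Let psiN := qc_ext phi_pD phi_pZ qcN.

Lemma qc_dual_idealization n :
  qc_dual_comp hD hZ qcN (id_hom S') (rm_map N (idealization_inl_hom P) n) =
  idealization_inr (psiN n).
Proof.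
pose i := rah_fun (idealization_inl_hom P).
pose S'i := restrict_scalars i (idealization P)^o.
have baseD : {morph (fun n => h n : S'i) : x y / x + y} by exact: hD.
have baseZ (r : R) x : (h (r *: x) : S'i) = ralg_str S r *: (h x : S'i).
  by rewrite /h phi_pZ idealization_inrZ.
move: n; rewrite /qc_dual_comp /psiN; apply: (qc_extension_unique baseD baseZ qcN); split.
- by move=> x y /=; rewrite rm_add qc_extD.
- by move=> s x /=; rewrite rm_scale qc_extZ.
- by move=> m /=; rewrite -(rm_comp (k := str_hom S')) ?qc_extE.
- by move=> x y /=; rewrite qc_extD idealization_inrD.
- by move=> s x /=; rewrite qc_extZ idealization_inrZ.
- by move=> m /=; rewrite qc_extE.
Qed.

Lemma qc_ext_rmorph_eq0 x : psiN (f S x) = 0.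
Proof.
apply: idealization_inr_inj; rewrite -qc_dual_idealization -rmor_nat.
by rewrite qc_dual_comp_rmorph_eq0 (additive0 (@idealization_inrD _ P)).
Qed.

Lemma coker_extension_exists : exists psi : rm_obj C S -> P,
  [/\ (forall x y, psi (x + y) = psi x + psi y),
      (forall (s : S) x, psi (s *: x) = s *: psi x),
      (forall m, psi (rm_map C (str_hom S) m) = phi m) &
      (forall psi' : rm_obj C S -> P,
          (forall x y, psi' (x + y) = psi' x + psi' y) ->
          (forall (s : S) x, psi' (s *: x) = s *: psi' x) ->
          (forall m, psi' (rm_map C (str_hom S) m) = phi m) ->
          forall x, psi' x = psi x)].
Proof.
have [chi [chiD chiZ chiE]] := coker_factor cokerC (qc_extD phi_pD phi_pZ qcN)
  (qc_extZ phi_pD phi_pZ qcN) qc_ext_rmorph_eq0.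
exists chi; split=> // [c|psi' D' Z' E' c].
- by have [n <-] := (cokerC _).1 c; rewrite -rmor_nat chiE qc_extE.
have [n <-] := (cokerC S).1 c; rewrite chiE; move: n.
apply: (qc_extension_unique phi_pD phi_pZ qcN); last exact: qc_extP.
by split=> [x y|s x|m] /=; rewrite ?rmor_add ?D' ?rmor_scale ?Z' // rmor_nat E'.
Qed.
End CokernelQuasiCoherent.

Lemma dually_separated_coker_qc (R : comPzRingType) (M N C : rmodule R)
    (f : rmorph M N) (p : rmorph N C) :
  dually_separated M -> quasi_coherent N -> is_coker f p -> quasi_coherent C.
Proof.
move=> dsM qcN cokerC S P phi phiD phiZ.
exact: (coker_extension_exists dsM qcN cokerC phiD phiZ).
Qed.

(** * Quasi-coherent cokernels imply dual separation *)

Definition comp_ralg_hom (R : comPzRingType) (A B C : ralg R) (g : ralg_hom A B)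
    (h : ralg_hom B C) : ralg_hom A C :=
  @RAlgHom R A C (rah_fun h \o rah_fun g)
    (fun r => etrans (congr1 h (rah_str g r)) (rah_str h r)).

Section DualTensor.
Variables (R : comPzRingType) (M : rmodule R) (S : ralg R) (w : dual_elt M S).

Definition dual_tensor (U : ralg R) (y : rm_obj M U) : tensor S U :=
  dw w (tensor_inl_hom S U) (rm_map M (tensor_inr_hom S U) y).

Lemma dual_tensorD (U : ralg R) : {morph @dual_tensor U : x y / x + y}.
Proof. by move=> x y; rewrite /dual_tensor rm_add dw_add. Qed.
Lemma dual_tensorZ (U : ralg R) (s : U) y : dual_tensor (s *: y) = s *: dual_tensor y.
Proof. by rewrite /dual_tensor rm_scale dw_scale tensor_scaleE. Qed.
Lemma dual_tensor_nat (U U' : ralg R) (g : ralg_hom U U') y :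
  dual_tensor (rm_map M g y) = tensor_map g (dual_tensor y).
Proof.
pose k := comp_ralg_hom g (tensor_inr_hom S U').
rewrite /dual_tensor -(rm_comp (g := g) (h := tensor_inr_hom S U') (k := k)) //.
rewrite (rm_comp (g := tensor_inr_hom S U) (h := tensor_map_hom S g)).
  have inlE s : tensor_map_hom S g (tensor_inl_hom S U s) = tensor_inl_hom S U' s.
    exact: tensor_map_inl.
  by rewrite (dw_nat _ inlE).
by move=> u; rewrite /= tensor_map_inr.
Qed.

Definition dual_tensor_rmorph : rmorph M (tensor_rmodule S) :=
  @RMorph R M (tensor_rmodule S) dual_tensor dual_tensorD dual_tensorZ dual_tensor_nat.

Lemma dual_tensor_base m : dual_tensor m = tensor_inl (ralgR R) (dual_res w m).
Proof.
rewrite /dual_tensor /dual_res (rm_comp (g := str_hom S) (h := tensor_inl_hom S (ralgR R))) => [|r].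
  have inlE s : tensor_inl_hom S (ralgR R) (id_hom S s) = tensor_inl_hom S (ralgR R) s.
    by [].
  by rewrite (dw_nat _ inlE).
by rewrite /= tensor_inl_str.
Qed.

Lemma dual_tensor_mult (T : ralg R) (u : ralg_hom S T) x :
  dw w u x = tensor_mult u (dual_tensor x).
Proof.
have multE s : tensor_mult_hom u (tensor_inl_hom S T s) = u s.
  exact: tensor_mult_inl.
have xE : x = rm_map M (tensor_mult_hom u) (rm_map M (tensor_inr_hom S T) x).
  by rewrite -(rm_comp (k := id_hom T)) ?rm_id // => t; rewrite /= tensor_mult_inr.
by rewrite {1}xE (dw_nat _ multE).
Qed.
End DualTensor.

Section VanishingMorphism.
Variables (R : comPzRingType) (M N C : rmodule R) (f : rmorph M N) (p : rmorph N C).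
Hypotheses (qcN : quasi_coherent N) (cokerC : is_coker f p) (qcC : quasi_coherent C).
Hypothesis f0 : forall m, f (ralgR R) m = 0.

Lemma coker_proj_base_inj : injective (p (ralgR R)).
Proof.
move=> x y pxy; apply/eqP; rewrite -subr_eq0; apply/eqP.
have /(cokerC _).2[m <-] : p _ (x - y) = 0.
  by rewrite (additiveB (rmor_add p (S := ralgR R))) pxy subrr.
exact: f0.
Qed.

Lemma rmorph_eq0_of_base (U : ralg R) x : f U x = 0.
Proof.
pose sec c := projT1 (cid ((cokerC (ralgR R)).1 c)).
have secK c : p _ (sec c) = c by rewrite /sec; case: cid.
have strD : {morph rm_map N (str_hom U) : a b / a + b} by exact: rm_add.
have strZ (r : R) n : rm_map N (str_hom U) (r *: n) = ralg_str U r *: rm_map N (str_hom U) n.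
  exact: rm_scale.
pose phi c := rm_map N (str_hom U) (sec c).
have phiD : {morph phi : c d / c + d}.
  move=> c d; rewrite /phi -strD; congr rm_map.
  by apply: coker_proj_base_inj; rewrite rmor_add !secK.
have phiZ (r : R) c : phi (r *: c) = ralg_str U r *: phi c.
  rewrite /phi -strZ; congr rm_map.
  by apply: coker_proj_base_inj; rewrite rmor_scale !secK.
have [psi [psiD psiZ psiE _]] := qcC phiD phiZ.
have idE : psi \o p U =1 id.
  apply: (qc_extension_unique strD strZ qcN); split=> //= [a b|s a|n].
  - by rewrite /= rmor_add psiD.
  - by rewrite rmor_scale psiZ.
  - by rewrite rmor_nat psiE /phi; congr rm_map; apply: coker_proj_base_inj; rewrite secK.
rewrite -[LHS]idE /= -[RHS](additive0 psiD); congr psi.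
by apply/(cokerC U).2; exists x.
Qed.
End VanishingMorphism.

Lemma coker_qc_dually_separated (R : comPzRingType) (M : rmodule R) :
  (forall N : rmodule R, quasi_coherent N ->
   forall (f : rmorph M N) (C : rmodule R) (p : rmorph N C),
     is_coker f p -> quasi_coherent C) -> dually_separated M.
Proof.
move=> cokerqc S w w' ww' T u x.
pose g := dual_tensor_rmorph (dual_sub w w').
have qcN := tensor_rmodule_qc (S := S).
have cokerg := coker_rmorph_is_coker g.
have g0 := rmorph_eq0_of_base qcN cokerg (cokerqc _ qcN _ _ _ cokerg).
have /g0 gT : forall m, g (ralgR R) m = 0.
  by move=> m; have := dual_tensor_base (dual_sub w w') m; rewrite dual_res_sub ww' subrr rmorph0.
apply/eqP; rewrite -subr_eq0; apply/eqP.
have -> : dw w u x - dw w' u x = dw (dual_sub w w') u x by [].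
rewrite dual_tensor_mult.
have -> : dual_tensor (dual_sub w w') x = 0 := gT T x.
exact: rmorph0.
Qed.

Theorem lemma3p12 (R : comPzRingType) (M : rmodule R) :
  dually_separated M <->
  (forall (N : rmodule R), quasi_coherent N ->
   forall (f : rmorph M N) (C : rmodule R) (p : rmorph N C),
     is_coker f p -> quasi_coherent C).
Proof.
split; [move=> dsM N qcN f C p; exact: dually_separated_coker_qc | exact: coker_qc_dually_separated].
Qed.
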